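(* For every $V_{\sf P}\ge \tfrac13$, $$\lim_{\delta\to1}\lim_{p\to0}\frac{{\sf Util}({\sf PEAR})-{\sf Util}({\sf APP})}{{\sf Util}({\sf APP})}\ \ge\ \frac{1}{V_{\sf P}+1}.$$
   Context: Model. Time $t=0,1,2,\dots$, discount factor $\delta\in[0,1)$. Two item types, popular ${\sf P}$ and niche ${\sf N}$, infinitely many items each; at each time $t$ the platform recommends a set $\pi_t$ of two fresh items of chosen types. Utility of item $i$: $u_i=V_{\tau(i)}+\epsilon_i$; outside option: $u_\emptyset=\epsilon_\emptyset$; all noises i.i.d. Gumbel with scale $1$ and mean $0$. User chooses $c_t=\arg\max_{j\in\pi_t\cup\{\emptyset\}}u_j$. $V_{\sf P}$ is a known constant; $V_{\sf N}$ is drawn once, fixed over time, independent of noise, with $\mathbb P(V_{\sf N}=(1-p)/p)=p$, $\mathbb P(V_{\sf N}=-1)=1-p$, $p\in(0,1)$. ${\sf Util}(\pi)=\sum_{t\ge0}\delta^t\mathbb E[\max_{j\in\pi_t\cup\{\emptyset\}}u_j]$ (expectation also over $V_{\sf N}$). ${\sf APP}$ recommends two popular items at every time. Policy ${\sf PEAR}$: let $\rho_1=\frac{e^{(1-p)/p}}{1+e^{V_{\sf P}}+e^{(1-p)/p}}$, $\rho_2=\frac{e^{-1}}{1+e^{V_{\sf P}}+e^{-1}}$. Maintain counters $S,F$ (initially $0$) and $p_0=p$. At each time $t$: if $p_t\ge p$, recommend one popular and one niche item; if the niche item is chosen increment $S$, otherwise increment $F$. If $p_t<p$, recommend two popular items.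 Then set $p_{t+1}=\left(1+\frac{1-p}{p}\cdot\frac{\rho_2^S(1-\rho_2)^F}{\rho_1^S(1-\rho_1)^F}\right)^{-1}$. *)

From Stdlib Require Import Reals.
From Coquelicot Require Import Coquelicot.
Open Scope R_scope.

(* Multinomial-logit (Gumbel, scale 1, mean 0) closed forms:
   for a menu with mean utilities v_1..v_k plus outside option (mean 0),
   E[max utility] = ln (1 + sum_i exp v_i),
   P(item j chosen) = exp v_j / (1 + sum_i exp v_i). *)

Definition VNhigh (p : R) : R := (1 - p) / p.
Definition VNlow : R := -1.

Definition U_PN (VP vN : R) : R := ln (1 + exp VP + exp vN).
Definition U_PP (VP : R) : R := ln (1 + 2 * exp VP).

Definition rho_of (VP vN : R) : R := exp vN / (1 + exp VP + exp vN).
Definition rho1 (VP p : R) : R := rho_of VP (VNhigh p).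
Definition rho2 (VP : R) : R := rho_of VP VNlow.

(* PEAR's belief p_t after S niche-successes and F failures *)
Definition posterior (VP p : R) (S F : nat) : R :=
  / (1 + (1 - p) / p *
         ((rho2 VP ^ S * (1 - rho2 VP) ^ F) /
          (rho1 VP p ^ S * (1 - rho1 VP p) ^ F))).

Definition explores (VP p : R) (S F : nat) : bool :=
  if Rle_dec p (posterior VP p S F) then true else false.

(* stay VP p rho S F n : probability, when each exploration step produces a
   niche choice with probability rho, that starting from state (S,F) the
   policy explores at the current step and at each of the next n steps. *)
Fixpoint stay (VP p rho : R) (S F : nat) (n : nat) : R :=
  match n with
  | O => if explores VP p S F then 1 else 0
  | Datatypes.S m =>
      if explores VP p S F then
        rho * stay VP p rho (Datatypes.S S) F m
        + (1 - rho) * stay VP p rho S (Datatypes.S F) m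
      else 0
  end.

Definition explore_prob (VP p vN : R) (t : nat) : R :=
  stay VP p (rho_of VP vN) 0 0 t.

Definition step_util_PEAR (VP p vN : R) (t : nat) : R :=
  explore_prob VP p vN t * U_PN VP vN
  + (1 - explore_prob VP p vN t) * U_PP VP.

Definition Util_PEAR (VP delta p : R) : R :=
  Series (fun t => delta ^ t *
     (p * step_util_PEAR VP p (VNhigh p) t
      + (1 - p) * step_util_PEAR VP p VNlow t)).

Definition Util_APP (VP delta : R) : R :=
  Series (fun t => delta ^ t * U_PP VP).

Definition rel_gain (VP delta p : R) : R :=
  (Util_PEAR VP delta p - Util_APP VP delta) / Util_APP VP delta.

(** As p -> 0, for each fixed time t: if the niche item is good, its value (1-p)/p is so
    large that it keeps being chosen, hence explored, with probability -> 1, and the prior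
    weight p times that value tends to 1; if it is bad, one rejection already pushes the
    posterior below p, so PEAR explores at time t exactly when the t previous niche items
    were all chosen, i.e. with probability rho2^t. The per-step utility thus tends to
    1 + rho2^t U_PN(-1) + (1 - rho2^t) U_PP, and since all per-step utilities are uniformly
    bounded, the discounted sums converge as well. Summing the geometric series, the relative
    gain tends to (1 + (1-delta)(U_PN(-1) - U_PP)/(1 - delta rho2)) / U_PP, whose limit as
    delta -> 1 is 1 / U_PP = 1 / ln (1 + 2 e^VP), at least 1 / (VP + 1) when VP >= 1/3. *)

From Stdlib Require Import Reals Lra Lia Psatz Factorial.
From Coquelicot Require Import Coquelicot.
Open Scope R_scope.

Lemma pow_le_1 (x : R) (n : nat) : 0 <= x <= 1 -> 0 <= x ^ n <= 1.
Proof.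
  intro Hx. split; [apply pow_le; lra |].
  rewrite <- (pow1 n). apply pow_incr. exact Hx.
Qed.

Lemma one_sub_pow_le (x : R) (n : nat) : 0 <= x <= 1 -> 1 - x ^ n <= INR n * (1 - x).
Proof.
  intro Hx. induction n as [| n IH]; [simpl; lra |].
  rewrite S_INR, <- tech_pow_Rmult. pose proof (pow_le_1 x n Hx). nra.
Qed.

Lemma exp_partial_sum_le (x : R) (n : nat) : 0 <= x ->
  sum_f_R0 (fun k => / INR (fact k) * x ^ k) n <= exp x.
Proof.
  intro Hx. unfold exp. destruct (exist_exp x) as [l Hl]. simpl.
  apply sum_incr; [exact Hl |]. intro k.
  apply Rmult_le_pos; [apply Rlt_le, Rinv_0_lt_compat, INR_fact_lt_0 | apply pow_le; exact Hx].
Qed.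

Lemma at_right_interval (x eta : R) : 0 < eta -> at_right x (fun y => x < y < x + eta).
Proof.
  intro He. exists (mkposreal eta He). intros y Hy Hxy.
  change (Rabs (y - x) < eta) in Hy. apply Rabs_lt_between in Hy. lra.
Qed.

Lemma at_left_interval (x eta : R) : 0 < eta -> at_left x (fun y => x - eta < y < x).
Proof.
  intro He. exists (mkposreal eta He). intros y Hy Hxy.
  change (Rabs (y - x) < eta) in Hy. apply Rabs_lt_between in Hy. lra.
Qed.

Lemma filterlim_at_right_0_of_bound (f : R -> R) (l K : R) :
  at_right 0 (fun p => Rabs (f p - l) <= K * p) -> filterlim f (at_right 0) (locally l).
Proof.
  intro Hf. apply filterlim_locally. intro eps.
  assert (HK : 0 < Rabs K + 1) by (pose proof (Rabs_pos K); lra).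
  assert (Heta : 0 < eps / (Rabs K + 1)) by (apply Rdiv_lt_0_compat; [apply cond_pos | lra]).
  generalize (filter_and _ _ Hf (at_right_interval 0 _ Heta)). apply filter_imp.
  intros p [Hfp Hp]. change (Rabs (f p - l) < eps).
  assert (HKp : (Rabs K + 1) * p < eps).
  { rewrite Rmult_comm. apply Rlt_div_r; lra. }
  pose proof (Rle_abs K). nra.
Qed.

Lemma filter_forall_le_nat {T : Type} {F : (T -> Prop) -> Prop} {FF : Filter F}
  (P : nat -> T -> Prop) (N : nat) :
  (forall t, F (P t)) -> F (fun x => forall t, (t <= N)%nat -> P t x).
Proof.
  intro HP. induction N as [| N IH].
  - generalize (HP 0%nat). apply filter_imp. intros x Hx t Ht.
    replace t with 0%nat by lia. exact Hx.
  - generalize (filter_and _ _ IH (HP (S N))). apply filter_imp.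
    intros x [Hx HxN] t Ht.
    destruct (Nat.eq_dec t (S N)) as [-> | Hne]; [exact HxN | apply Hx; lia].
Qed.

Lemma Series_geom_bound (u : nat -> R) (C q : R) : 0 <= q < 1 ->
  (forall k, Rabs (u k) <= C * q ^ k) -> ex_series u /\ Rabs (Series u) <= C / (1 - q).
Proof.
  intros Hq Hu.
  assert (Hg : ex_series (fun k => C * q ^ k)).
  { apply (@ex_series_scal_l R_AbsRing R_NormedModule C (fun k => q ^ k)).
    apply ex_series_geom. rewrite Rabs_pos_eq; lra. }
  assert (Hdom : forall k, norm (u k) <= C * q ^ k) by exact Hu.
  split; [exact (ex_series_le u _ Hdom Hg) |].
  assert (Habs : ex_series (fun k => Rabs (u k))).
  { apply (@ex_series_le R_AbsRing R_CompleteNormedModule _ (fun k => C * q ^ k)); [| exact Hg].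
    intro k. change (Rabs (Rabs (u k)) <= C * q ^ k). rewrite Rabs_Rabsolu. apply Hu. }
  eapply Rle_trans; [apply Series_Rabs; exact Habs |].
  eapply Rle_trans; [apply Series_le; [| exact Hg] |].
  - intro k. split; [apply Rabs_pos | apply Hu].
  - rewrite Series_scal_l, Series_geom by (rewrite Rabs_pos_eq; lra). lra.
Qed.

Lemma Rabs_sum_f_R0_le (u : nat -> R) (N : nat) (e : R) :
  (forall i, (i <= N)%nat -> Rabs (u i) <= e) -> Rabs (sum_f_R0 u N) <= (INR N + 1) * e.
Proof.
  intro Hu. eapply Rle_trans; [apply Rabs_triang_gen |].
  eapply Rle_trans; [apply (sum_Rle _ (fun _ => e)); exact Hu |].
  rewrite sum_cte, S_INR. lra.
Qed.

Lemma Series_shift_geom_bound (u : nat -> R) (C q : R) (n : nat) : 0 <= q < 1 ->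
  (forall k, Rabs (u k) <= C * q ^ k) ->
  Rabs (Series (fun k => u (n + k)%nat)) <= Rabs C * q ^ n / (1 - q).
Proof.
  intros Hq Hu. apply (Series_geom_bound _ _ q Hq). intro k.
  rewrite (Rmult_assoc _ _ (q ^ k)), <- pow_add.
  eapply Rle_trans; [apply Hu |].
  apply Rmult_le_compat_r; [apply pow_le; lra | apply Rle_abs].
Qed.

Lemma ex_series_discounted (u : nat -> R) (B delta : R) : 0 <= delta < 1 ->
  (forall t, Rabs (u t) <= B) -> ex_series (fun t => delta ^ t * u t).
Proof.
  intros Hd Hu. apply (Series_geom_bound _ B delta Hd). intro t.
  pose proof (pow_le_1 delta t ltac:(lra)).
  rewrite Rabs_mult, Rabs_pos_eq, Rmult_comm by lra.
  apply Rmult_le_compat_r; [lra | apply Hu].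
Qed.

(* Tannery's theorem for geometric weights: cut the series at a horizon N beyond which the
   tail is uniformly small, and use the pointwise limits on the finitely many first terms. *)
Lemma filterlim_discounted_Series {T : Type} {F : (T -> Prop) -> Prop} {FF : Filter F}
  (u : T -> nat -> R) (a : nat -> R) (Bu Ba delta : R) :
  0 <= delta < 1 ->
  F (fun x => forall t, Rabs (u x t) <= Bu) ->
  (forall t, Rabs (a t) <= Ba) ->
  (forall t, filterlim (fun x => u x t) F (locally (a t))) ->
  filterlim (fun x => Series (fun t => delta ^ t * u x t)) F
    (locally (Series (fun t => delta ^ t * a t))).
Proof.
  intros Hd HuB HaB Hlim. apply filterlim_locally. intro eps.
  pose proof (cond_pos eps) as Heps.
  set (B := Bu + Ba).
  assert (Hdt : forall t, 0 <= delta ^ t <= 1) by (intro t; apply pow_le_1; lra).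
  destruct (pow_lt_1_zero delta ltac:(rewrite Rabs_pos_eq; lra)
              (eps * (1 - delta) / (2 * (Rabs B + 1)))) as [N HN].
  { apply Rdiv_lt_0_compat; [nra | pose proof (Rabs_pos B); lra]. }
  assert (Hclose : F (fun x => forall t, (t <= N)%nat ->
                        Rabs (u x t - a t) < eps / (2 * (INR N + 1)))).
  { apply filter_forall_le_nat. intro t.
    assert (Hpos : 0 < eps / (2 * (INR N + 1))).
    { apply Rdiv_lt_0_compat; [lra | pose proof (pos_INR N); lra]. }
    exact (proj1 (filterlim_locally _ _) (Hlim t) (mkposreal _ Hpos)). }
  generalize (filter_and _ _ HuB Hclose). apply filter_imp. intros x [HxB Hx].
  change (Rabs (Series (fun t => delta ^ t * u x t) - Series (fun t => delta ^ t * a t)) < eps).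
  set (d := fun t => delta ^ t * u x t - delta ^ t * a t).
  assert (Hdb : forall t, Rabs (d t) <= B * delta ^ t).
  { intro t. unfold d, B. rewrite <- Rmult_minus_distr_l, Rabs_mult, Rabs_pos_eq by apply Hdt.
    pose proof (Rabs_triang (u x t) (- a t)) as Htri. rewrite Rabs_Ropp in Htri.
    pose proof (HxB t). pose proof (HaB t).
    rewrite Rmult_comm. apply Rmult_le_compat_r; [apply Hdt | unfold Rminus; lra]. }
  pose proof (ex_series_discounted _ Bu delta Hd HxB).
  pose proof (ex_series_discounted _ Ba delta Hd HaB).
  rewrite <- Series_minus by assumption. fold d.
  rewrite (Series_incr_n d (S N)) by (lia || exact (proj1 (Series_geom_bound d B delta Hd Hdb))).
  simpl pred.
  assert (Hhead : Rabs (sum_f_R0 d N) <= eps / 2).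
  { replace (eps / 2) with ((INR N + 1) * (eps / (2 * (INR N + 1))))
      by (field; pose proof (pos_INR N); lra).
    apply Rabs_sum_f_R0_le. intros t Ht. unfold d.
    rewrite <- Rmult_minus_distr_l, Rabs_mult, Rabs_pos_eq by apply Hdt.
    specialize (Hx t Ht). pose proof (Hdt t). pose proof (Rabs_pos (u x t - a t)). nra. }
  assert (Htail : Rabs (Series (fun k => d (S N + k)%nat)) < eps / 2).
  { assert (HdN : Rabs B * delta ^ S N < eps * (1 - delta) / 2).
    { specialize (HN (S N) ltac:(lia)). rewrite Rabs_pos_eq in HN by apply Hdt.
      apply Rlt_div_r in HN; [| pose proof (Rabs_pos B); lra].
      pose proof (Rabs_pos B). pose proof (Hdt (S N)). nra. }
    eapply Rle_lt_trans; [apply (Series_shift_geom_bound d B delta (S N) Hd Hdb) |].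
    apply Rlt_div_l; lra. }
  eapply Rle_lt_trans; [apply Rabs_triang | lra].
Qed.

Lemma le_posterior_odds_iff (p k : R) : 0 < p < 1 -> 0 <= k ->
  p <= / (1 + (1 - p) / p * k) <-> k <= 1.
Proof.
  intros Hp Hk.
  assert (HD : 0 < 1 + (1 - p) / p * k).
  { assert (0 <= (1 - p) / p) by (apply Rdiv_le_0_compat; lra). nra. }
  rewrite <- (Rmult_1_l (/ _)). change (p <= 1 / (1 + (1 - p) / p * k) <-> k <= 1).
  rewrite <- Rle_div_r by exact HD.
  replace (p * (1 + (1 - p) / p * k)) with (p + (1 - p) * k) by (field; lra).
  split; intro; nra.
Qed.

Section PEAR.

Variable VP : R.

Lemma U_PP_pos : 0 < U_PP VP.
Proof. unfold U_PP. rewrite <- ln_1. apply ln_increasing; pose proof (exp_pos VP); lra. Qed.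

Lemma U_PN_nonneg (v : R) : 0 <= U_PN VP v.
Proof.
  unfold U_PN. rewrite <- ln_1. apply ln_le; [lra |].
  pose proof (exp_pos VP); pose proof (exp_pos v); lra.
Qed.

Lemma ln_two_add_exp_nonneg : 0 <= ln (2 + exp VP).
Proof. rewrite <- ln_1. apply ln_le; pose proof (exp_pos VP); lra. Qed.

Lemma U_PP_le_succ : 1 / 3 <= VP -> U_PP VP <= VP + 1.
Proof.
  intro HVP. set (y := exp (1 / 3)).
  (* The degree-4 Taylor polynomial of exp at 1/3; the margin is too thin for degree 3. *)
  set (a := 2713 / 1944).
  assert (Hay : a <= y).
  { pose proof (exp_partial_sum_le (1 / 3) 4 ltac:(lra)) as H. simpl in H. unfold a, y. lra. }
  assert (He : exp 1 = y ^ 3).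
  { unfold y. simpl. rewrite Rmult_1_r, <- !exp_plus. f_equal. lra. }
  assert (HyV : y <= exp VP).
  { unfold y. destruct HVP as [H | <-]; [left; apply exp_increasing |]; lra. }
  assert (Hy4 : 1 <= (y ^ 3 - 2) * y).
  { (* y^4 - 2y - 1 = (y - a)(y^3 + a y^2 + a^2 y + a^3 - 2) + (a^4 - 2a - 1) *)
    assert (0 <= (y - a) * (y ^ 3 + a * y ^ 2 + a ^ 2 * y + a ^ 3 - 2)).
    { apply Rmult_le_pos; [lra |]. unfold a in *. nra. }
    unfold a in *. nra. }
  assert (Hk : 1 + 2 * exp VP <= exp 1 * exp VP).
  { rewrite He.
    assert (a ^ 3 <= y ^ 3) by (apply pow_incr; unfold a in *; lra).
    assert ((y ^ 3 - 2) * y <= (y ^ 3 - 2) * exp VP)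
      by (apply Rmult_le_compat_l; [unfold a in *; lra | exact HyV]).
    lra. }
  unfold U_PP. rewrite <- (ln_exp (VP + 1)), Rplus_comm, exp_plus.
  apply ln_le; [pose proof (exp_pos VP); lra | lra].
Qed.

Lemma rho_of_bounds (v : R) : 0 < rho_of VP v < 1.
Proof.
  unfold rho_of. pose proof (exp_pos VP); pose proof (exp_pos v). split.
  - apply Rdiv_lt_0_compat; lra.
  - apply Rlt_div_l; lra.
Qed.

Lemma rho1_bounds (p : R) : 0 < rho1 VP p < 1.
Proof. exact (rho_of_bounds (VNhigh p)). Qed.

Lemma rho2_bounds : 0 < rho2 VP < 1.
Proof. exact (rho_of_bounds VNlow). Qed.

Lemma rho_of_le (v w : R) : v <= w -> rho_of VP v <= rho_of VP w.
Proof.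
  intro Hvw. unfold rho_of.
  pose proof (exp_pos VP); pose proof (exp_pos v); pose proof (exp_pos w).
  assert (exp v <= exp w) by (destruct Hvw as [Hlt | ->]; [left; apply exp_increasing |]; lra).
  apply Rmult_le_reg_r with ((1 + exp VP + exp v) * (1 + exp VP + exp w)); [nra |].
  field_simplify; nra.
Qed.

Lemma rho2_le_rho1 (p : R) : 0 < p <= 1 -> rho2 VP <= rho1 VP p.
Proof.
  intro Hp. apply rho_of_le. unfold VNlow, VNhigh.
  assert (0 <= (1 - p) / p) by (apply Rdiv_le_0_compat; lra). lra.
Qed.

Lemma one_sub_rho1_le (p : R) : 0 < p -> 1 - rho1 VP p <= (1 + exp VP) * p.
Proof.
  intro Hp. unfold rho1, rho_of, VNhigh. set (x := (1 - p) / p).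
  assert (Hpx : 1 <= p * exp x).
  { pose proof (exp_ineq1_le x).
    replace 1 with (p * (1 + x)) by (unfold x; field; lra). apply Rmult_le_compat_l; lra. }
  pose proof (exp_pos VP); pose proof (exp_pos x).
  replace (1 - exp x / (1 + exp VP + exp x)) with ((1 + exp VP) / (1 + exp VP + exp x))
    by (field; lra).
  apply Rmult_le_reg_r with (1 + exp VP + exp x); [lra |].
  field_simplify; nra.
Qed.

(* p * VNhigh p = 1 - p: the high niche value exactly compensates its prior weight. *)
Lemma p_U_PN_VNhigh_close (p : R) : 0 < p <= 1 ->
  Rabs (p * U_PN VP (VNhigh p) - 1) <= p * (1 + ln (2 + exp VP)).
Proof.
  intro Hp. pose proof ln_two_add_exp_nonneg. unfold U_PN, VNhigh. set (x := (1 - p) / p).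
  assert (Hpx : p * x = 1 - p) by (unfold x; field; lra).
  assert (Hx : 0 <= x) by (apply Rdiv_le_0_compat; lra).
  pose proof (exp_pos VP); pose proof (exp_pos x).
  assert (1 <= exp x) by (pose proof (exp_ineq1_le x); lra).
  assert (Hlo : x <= ln (1 + exp VP + exp x)).
  { rewrite <- (ln_exp x) at 1. apply ln_le; lra. }
  assert (Hhi : ln (1 + exp VP + exp x) <= x + ln (2 + exp VP)).
  { rewrite <- (ln_exp x) at 2. rewrite <- ln_mult by lra. apply ln_le; [lra | nra]. }
  apply Rabs_le_between. split; nra.
Qed.

Lemma explores_iff (p : R) (S F : nat) : 0 < p < 1 ->
  explores VP p S F = true <->
  rho2 VP ^ S * (1 - rho2 VP) ^ F <= rho1 VP p ^ S * (1 - rho1 VP p) ^ F.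
Proof.
  intro Hp. pose proof rho2_bounds. pose proof (rho1_bounds p).
  assert (HA : 0 <= rho2 VP ^ S * (1 - rho2 VP) ^ F)
    by (apply Rmult_le_pos; apply pow_le; lra).
  assert (HB : 0 < rho1 VP p ^ S * (1 - rho1 VP p) ^ F)
    by (apply Rmult_lt_0_compat; apply pow_lt; lra).
  rewrite (Rdiv_le_1 _ _ HB), <- (le_posterior_odds_iff p) by (try apply Rdiv_le_0_compat; lra).
  unfold explores, posterior. destruct (Rle_dec _ _); split; easy.
Qed.

Lemma stay_bounds (p rho : R) (S F n : nat) :
  0 <= rho <= 1 -> 0 <= stay VP p rho S F n <= 1.
Proof.
  intro Hrho. revert S F. induction n as [| n IH]; intros S F; simpl.
  - destruct (explores VP p S F); lra.
  - destruct (explores VP p S F); [| lra].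
    pose proof (IH (Datatypes.S S) F). pose proof (IH S (Datatypes.S F)). nra.
Qed.

Lemma stay_geometric (p rho : R) (N : nat) :
  (forall S, (S <= N)%nat -> explores VP p S 0 = true /\ explores VP p S 1 = false) ->
  forall n S, (S + n <= N)%nat -> stay VP p rho S 0 n = rho ^ n.
Proof.
  intros Hexp n. induction n as [| n IH]; intros S HS; simpl;
    rewrite (proj1 (Hexp S ltac:(lia))); [reflexivity |].
  rewrite IH by lia.
  assert (Hstop : stay VP p rho S 1 n = 0)
    by (destruct n; simpl; rewrite (proj2 (Hexp S ltac:(lia))); reflexivity).
  rewrite Hstop. ring.
Qed.

(* Successes never stop the exploration (rho2 <= rho1), while for small p a single failure
   does, because 1 - rho1 = O(p) makes a failure overwhelming evidence for the low state. *)
Lemma explore_prob_geometric (p v : R) (t : nat) : 0 < p < 1 ->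
  (1 + exp VP) * p < rho2 VP ^ t * (1 - rho2 VP) ->
  explore_prob VP p v t = rho_of VP v ^ t.
Proof.
  intros Hp Hsmall. unfold explore_prob. apply (stay_geometric p _ t); [| lia].
  pose proof rho2_bounds. pose proof (rho1_bounds p).
  pose proof (rho2_le_rho1 p ltac:(lra)).
  intros S HS. split.
  - apply explores_iff; [lra |]. simpl. rewrite !Rmult_1_r. apply pow_incr. lra.
  - destruct (explores VP p S 1) eqn:E; [exfalso | reflexivity].
    apply explores_iff in E; [| lra]. simpl in E. rewrite !Rmult_1_r in E.
    pose proof (one_sub_rho1_le p ltac:(lra)).
    pose proof (pow_le_1 (rho1 VP p) S ltac:(lra)).
    assert (rho2 VP ^ t <= rho2 VP ^ S).
    { replace t with (S + (t - S))%nat by lia. rewrite pow_add.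
      pose proof (pow_le_1 (rho2 VP) S ltac:(lra)).
      pose proof (pow_le_1 (rho2 VP) (t - S) ltac:(lra)). nra. }
    nra.
Qed.

Lemma explore_prob_geometric_near_0 (t : nat) :
  at_right 0 (fun p => 0 < p < 1 /\ forall v, explore_prob VP p v t = rho_of VP v ^ t).
Proof.
  pose proof rho2_bounds. set (m := rho2 VP ^ t * (1 - rho2 VP)).
  assert (Hm : 0 < m) by (apply Rmult_lt_0_compat; [apply pow_lt |]; lra).
  assert (Hc : 0 < 1 + exp VP) by (pose proof (exp_pos VP); lra).
  generalize (at_right_interval 0 (Rmin 1 (m / (1 + exp VP)))
                ltac:(apply Rmin_pos; [lra | apply Rdiv_lt_0_compat; lra])).
  apply filter_imp. intros p Hp.
  assert (Hp1 : 0 < p < 1) by (pose proof (Rmin_l 1 (m / (1 + exp VP))); lra).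
  split; [exact Hp1 |]. intro v. apply explore_prob_geometric; [exact Hp1 |].
  fold m. pose proof (Rmin_r 1 (m / (1 + exp VP))). rewrite Rmult_comm. apply Rlt_div_r; lra.
Qed.

Definition PEAR_mean_step_util (p : R) (t : nat) : R :=
  p * step_util_PEAR VP p (VNhigh p) t + (1 - p) * step_util_PEAR VP p VNlow t.

Definition PEAR_limit_step_util (t : nat) : R :=
  1 + rho2 VP ^ t * U_PN VP VNlow + (1 - rho2 VP ^ t) * U_PP VP.

Lemma step_util_PEAR_bounds (p v : R) (t : nat) :
  0 <= step_util_PEAR VP p v t <= U_PN VP v + U_PP VP.
Proof.
  unfold step_util_PEAR. pose proof (U_PN_nonneg v). pose proof U_PP_pos.
  assert (0 <= explore_prob VP p v t <= 1).
  { apply stay_bounds. pose proof (rho_of_bounds v). lra. }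
  split; nra.
Qed.

Lemma PEAR_mean_step_util_bound (p : R) (t : nat) : 0 < p < 1 ->
  Rabs (PEAR_mean_step_util p t) <= 2 + ln (2 + exp VP) + 2 * U_PP VP + U_PN VP VNlow.
Proof.
  intro Hp. unfold PEAR_mean_step_util.
  pose proof (step_util_PEAR_bounds p (VNhigh p) t).
  pose proof (step_util_PEAR_bounds p VNlow t).
  pose proof (p_U_PN_VNhigh_close p ltac:(lra)) as Hh. apply Rabs_le_between in Hh.
  pose proof ln_two_add_exp_nonneg. pose proof U_PP_pos.
  assert (p * step_util_PEAR VP p (VNhigh p) t <= 2 + ln (2 + exp VP) + U_PP VP) by nra.
  assert ((1 - p) * step_util_PEAR VP p VNlow t <= U_PN VP VNlow + U_PP VP) by nra.
  apply Rabs_le_between. split; nra.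
Qed.

Lemma PEAR_limit_step_util_bound (t : nat) :
  Rabs (PEAR_limit_step_util t) <= 1 + U_PN VP VNlow + U_PP VP.
Proof.
  unfold PEAR_limit_step_util. pose proof (U_PN_nonneg VNlow). pose proof U_PP_pos.
  pose proof (pow_le_1 (rho2 VP) t ltac:(pose proof rho2_bounds; lra)).
  apply Rabs_le_between. split; nra.
Qed.

Lemma PEAR_mean_step_util_close (t : nat) :
  at_right 0 (fun p => Rabs (PEAR_mean_step_util p t - PEAR_limit_step_util t) <=
    (1 + ln (2 + exp VP) + INR t * (1 + exp VP) + 2 * U_PP VP + U_PN VP VNlow) * p).
Proof.
  generalize (explore_prob_geometric_near_0 t). apply filter_imp. intros p [Hp Hgeo].
  unfold PEAR_mean_step_util, PEAR_limit_step_util, step_util_PEAR.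
  rewrite !Hgeo. fold (rho1 VP p) (rho2 VP).
  pose proof (rho1_bounds p). pose proof rho2_bounds.
  pose proof (p_U_PN_VNhigh_close p ltac:(lra)) as Hh. apply Rabs_le_between in Hh.
  pose proof ln_two_add_exp_nonneg. pose proof (U_PN_nonneg VNlow). pose proof U_PP_pos.
  pose proof (pow_le_1 (rho1 VP p) t ltac:(lra)) as Hy.
  pose proof (pow_le_1 (rho2 VP) t ltac:(lra)) as Hz.
  assert (Hdecay : 1 - rho1 VP p ^ t <= INR t * (1 + exp VP) * p).
  { pose proof (pos_INR t). pose proof (one_sub_rho1_le p ltac:(lra)).
    rewrite Rmult_assoc. eapply Rle_trans; [apply one_sub_pow_le; lra |].
    apply Rmult_le_compat_l; lra. }
  set (y := rho1 VP p ^ t) in *. set (z := rho2 VP ^ t) in *.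
  set (w := p * U_PN VP (VNhigh p)) in *.
  set (X := z * U_PN VP VNlow + (1 - z) * U_PP VP).
  replace (p * (y * U_PN VP (VNhigh p) + (1 - y) * U_PP VP) + (1 - p) * X
           - (1 + z * U_PN VP VNlow + (1 - z) * U_PP VP))
    with (y * (w - 1) - (1 - y) + p * (1 - y) * U_PP VP - p * X) by (unfold w, X; ring).
  assert (Hyw : Rabs (y * (w - 1)) <= p * (1 + ln (2 + exp VP))).
  { rewrite Rabs_mult, Rabs_pos_eq by lra.
    assert (Rabs (w - 1) <= p * (1 + ln (2 + exp VP))) by (apply Rabs_le_between; lra).
    pose proof (Rabs_pos (w - 1)). nra. }
  apply Rabs_le_between in Hyw.
  assert (0 <= p * (1 - y) * U_PP VP <= p * U_PP VP).
  { assert (0 <= p * U_PP VP) by nra. split; nra. }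
  assert (0 <= X <= U_PN VP VNlow + U_PP VP) by (unfold X; split; nra).
  assert (0 <= p * X <= p * (U_PN VP VNlow + U_PP VP)) by (split; nra).
  apply Rabs_le_between. split; nra.
Qed.

Lemma Util_PEAR_lim (delta : R) : 0 <= delta < 1 ->
  filterlim (Util_PEAR VP delta) (at_right 0)
    (locally (Series (fun t => delta ^ t * PEAR_limit_step_util t))).
Proof.
  intro Hd.
  apply (filterlim_discounted_Series PEAR_mean_step_util _
           (2 + ln (2 + exp VP) + 2 * U_PP VP + U_PN VP VNlow)
           (1 + U_PN VP VNlow + U_PP VP) delta Hd).
  - generalize (at_right_interval 0 1 Rlt_0_1). apply filter_imp. intros p Hp t.
    apply PEAR_mean_step_util_bound. lra.
  - apply PEAR_limit_step_util_bound.
  - intro t. eapply filterlim_at_right_0_of_bound. apply PEAR_mean_step_util_close.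
Qed.

Lemma Series_PEAR_limit_step_util (delta : R) : 0 <= delta < 1 ->
  Series (fun t => delta ^ t * PEAR_limit_step_util t) =
  (1 + U_PP VP) / (1 - delta) + (U_PN VP VNlow - U_PP VP) / (1 - delta * rho2 VP).
Proof.
  intro Hd. pose proof rho2_bounds.
  assert (Hq1 : Rabs delta < 1) by (rewrite Rabs_pos_eq; lra).
  assert (Hq2 : Rabs (delta * rho2 VP) < 1) by (rewrite Rabs_pos_eq; nra).
  rewrite (Series_ext _ (fun t => delta ^ t * (1 + U_PP VP)
                               + (delta * rho2 VP) ^ t * (U_PN VP VNlow - U_PP VP))).
  2: { intro t. unfold PEAR_limit_step_util. rewrite Rpow_mult_distr. ring. }
  rewrite Series_plus by (apply ex_series_scal_r, ex_series_geom; assumption).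
  rewrite !Series_scal_r, !Series_geom by assumption. unfold Rdiv. ring.
Qed.

Lemma Util_APP_eq (delta : R) : 0 <= delta < 1 -> Util_APP VP delta = U_PP VP / (1 - delta).
Proof.
  intro Hd. unfold Util_APP.
  rewrite Series_scal_r, Series_geom by (rewrite Rabs_pos_eq; lra). unfold Rdiv. ring.
Qed.

Definition PEAR_gain_limit (delta : R) : R :=
  (1 + (1 - delta) * (U_PN VP VNlow - U_PP VP) / (1 - delta * rho2 VP)) / U_PP VP.

Lemma rel_gain_lim (delta : R) : 0 <= delta < 1 ->
  filterlim (rel_gain VP delta) (at_right 0) (locally (PEAR_gain_limit delta)).
Proof.
  intro Hd. pose proof rho2_bounds. pose proof U_PP_pos.
  set (A := Util_APP VP delta).
  set (S0 := Series (fun t => delta ^ t * PEAR_limit_step_util t)).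
  replace (PEAR_gain_limit delta) with ((S0 - A) / A).
  2: { unfold S0, A. rewrite Series_PEAR_limit_step_util, Util_APP_eq by exact Hd.
       unfold PEAR_gain_limit. field. repeat split; nra. }
  apply (filterlim_comp _ _ _ (Util_PEAR VP delta) (fun x => (x - A) / A) _ (locally S0));
    [apply Util_PEAR_lim; exact Hd |].
  apply (@ex_derive_continuous R_AbsRing R_NormedModule (fun x => (x - A) / A)).
  auto_derive. exact I.
Qed.

Lemma PEAR_gain_limit_at_1 : filterlim PEAR_gain_limit (at_left 1) (locally (/ U_PP VP)).
Proof.
  pose proof rho2_bounds. pose proof U_PP_pos.
  replace (/ U_PP VP) with (PEAR_gain_limit 1) by (unfold PEAR_gain_limit; field; lra).
  apply (filterlim_filter_le_1 (F := locally 1)); [apply filter_le_within |].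
  apply (@ex_derive_continuous R_AbsRing R_NormedModule). unfold PEAR_gain_limit.
  auto_derive. repeat split; lra.
Qed.

End PEAR.

Theorem mainTheorem6 (VP : R) (hVP : 1 / 3 <= VP) :
  exists (L : R -> R) (M : R),
    at_left 1 (fun delta =>
      filterlim (fun p => rel_gain VP delta p) (at_right 0) (locally (L delta)))
    /\ filterlim L (at_left 1) (locally M)
    /\ 1 / (VP + 1) <= M.
Proof.
  exists (PEAR_gain_limit VP), (/ U_PP VP). split; [| split].
  - generalize (at_left_interval 1 1 Rlt_0_1). apply filter_imp. intros delta Hd.
    apply rel_gain_lim. lra.
  - apply PEAR_gain_limit_at_1.
  - pose proof (U_PP_pos VP). pose proof (U_PP_le_succ VP hVP).
    unfold Rdiv. rewrite Rmult_1_l. apply Rinv_le_contravar; lra.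
Qed.
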